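(* Let $(M,d)$ be a compact metric space, $\mu$ a probability measure on $M$, $k:M\times M\to[0,1]$ measurable, $M^s\subseteq M$ measurable, and $\rho>0$. For a probability measure $\nu$ on $M$ and measurable $v:M\setminus M^s\to[0,1]$ define, for $x\in M\setminus M^s$, $$(T_\nu v)(x)=\frac{\int_{M^s}k(x,y)\,d\nu(y)+\int_{M\setminus M^s}k(x,y)v(y)\,d\nu(y)}{\rho+\int_M k(x,y)\,d\nu(y)}.$$ Let $v^*:M\setminus M^s\to[0,1]$ be the unique measurable map with $T_\mu v^*=v^*$. For a finite sample $S=\{x_1,\dots,x_n\}$ let $\mu_S$ be the empirical measure $\mu_S(P)=\frac1n\sum_{i=1}^n\mathbf 1(x_i\in P)$. Then for every $x\in M\setminus M^s$ and every $\epsilon>0$, $$\Pr_{S\sim\mu^n}\Big[\big|(T_\mu v^* )(x)-(T_{\mu_S}v^* )(x)\big|>\epsilon\Big]<4\exp\Big(-\frac{n\rho^2\epsilon^2}{9}\Big),$$ where $S\sim\mu^n$ means $x_1,\dots,x_n$ are i.i.d. with law $\mu$. *)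

From HB Require Import structures.
From mathcomp Require Import all_boot all_order all_algebra.
From mathcomp Require Import all_classical all_reals all_analysis.
Set Implicit Arguments. Unset Strict Implicit. Unset Printing Implicit Defensive.
Import Order.TTheory GRing.Theory Num.Theory.
Import numFieldNormedType.Exports.
Local Open Scope classical_set_scope.
Local Open Scope ring_scope.

(* MathComp-Analysis' generated-sigma-algebra type needs a pointed carrier;
   [withpt t0] is T pointed at t0 (a harmless technicality: any space
   carrying a probability measure is nonempty). *)
Definition withpt (T : Type) (t0 : T) : Type := T.
Section withpt_instances.
Variables (T : topologicalType) (t0 : T).
HB.instance Definition _ := Choice.on (withpt t0).
HB.instance Definition _ := isPointed.Build (withpt t0) t0.
End withpt_instances.

Definition borel (T : topologicalType) (t0 : T) :=
  @g_sigma_algebraType (withpt t0) (@open T).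

Definition empirical {d} {T : measurableType d} {R : realType} (s : seq T)
  : {measure set T -> \bar R} :=
  mscale ((size s)%:R^-1)%:nng
    (msum (fun k => @dirac _ T (nth point s k) R) (size s)).

Definition Top {d} {T : measurableType d} {R : realType}
  (nu : {measure set T -> \bar R}) (k : T * T -> R) (Ms : set T) (rho : R)
  (v : T -> R) (x : T) : R :=
  (\int[nu]_(y in Ms) k (x, y) + \int[nu]_(y in ~` Ms) (k (x, y) * v y))
  / (rho + \int[nu]_(y in [set: T]) k (x, y)).

Definition mutually_independent {dO d} {O : measurableType dO}
  {T : measurableType d} {R : realType} (P : probability O R) (n : nat)
  (X : 'I_n -> O -> T) : Prop :=
  forall A : 'I_n -> set T, (forall i, measurable (A i)) ->
    P (\bigcap_(i in [set: 'I_n]) (X i @^-1` A i)) =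
    (\prod_(i < n) P (X i @^-1` A i))%E.

(* Let th = T_mu v*(x), let G be the integrand of the numerator of T (k(x,y) on
   Ms, k(x,y) v*(y) off Ms) and h = G - th k(x,_). Then \int h dmu = th rho,
   |h - th rho| <= 1, and T_{mu_S} v*(x) - th is (mean_S h - th rho) divided by
   rho + mean_S k(x,_) >= rho, so the bad event forces |mean_S h - th rho| > rho eps.
   That has probability at most 2 exp(- n rho^2 eps^2 / 9) by a Chernoff bound
   for sample means of a variable with values in an interval of radius 1.
   Independence is only assumed for events, so the Chernoff bound is proved
   after rounding h up to a finite grid: the vector of grid cells hit by the
   sample has the product law, and e^y <= 1 + y + 3/2 y^2 (y <= 1/3) bounds the
   moment generating function of the rounded variable. *)

From HB Require Import structures.
From mathcomp Require Import all_boot all_order all_algebra.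
From mathcomp Require Import all_classical all_reals all_analysis.
From mathcomp Require Import measurable_realfun ring lra.
Import Order.TTheory GRing.Theory Num.Theory.
Import numFieldNormedType.Exports.
Set Implicit Arguments.
Unset Strict Implicit.
Unset Printing Implicit Defensive.
Local Open Scope classical_set_scope.
Local Open Scope ring_scope.

Lemma expR_le_quadratic (R : realType) (c y : R) :
  1 < c -> y <= 1 - c^-1 -> expR y <= 1 + y + c * y ^+ 2.
Proof.
move=> c1 yc.
have c0 : 0 < c by apply: lt_trans c1.
have cy : c * y <= c - 1.
  by have := ler_wpM2l (ltW c0) yc; rewrite mulrBr mulr1 mulfV ?lt0r_neq0.
have y1 : 0 < 1 - y by nra.
have e_inv : expR y * (1 - y) <= 1.
  have := ler_wpM2l (expR_ge0 y) (expR_ge1Dx (- y)).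
  by rewrite expRN mulfV ?gt_eqF ?expR_gt0.
have quad : 1 <= (1 + y + c * y ^+ 2) * (1 - y).
  have : 0 <= y ^+ 2 * (c - 1 - c * y) by rewrite mulr_ge0 ?sqr_ge0 ?subr_ge0.
  nra.
by rewrite -(ler_pM2r y1); apply: le_trans quad.
Qed.

Lemma ltr_distl_div (R : realFieldType) (e th a c : R) : 0 < c ->
  (e < `|th - a / c|) = (e * c < `|th * c - a|).
Proof.
move=> c0; rewrite -ltr_pdivlMr // -[th in th - _](mulfK (lt0r_neq0 c0)).
by rewrite -mulrBl normrM normfV (gtr0_norm c0).
Qed.

Lemma sum_ffun_prod_tail_le (R : realType) (I : finType) (n : nat)
    (p u : I -> R) (lam c : R) :
  (forall j, 0 <= p j) -> 0 <= lam ->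
  \sum_(f : {ffun 'I_n -> I} | c < \sum_(i < n) u (f i)) \prod_(i < n) p (f i)
  <= expR (- (lam * c)) * (\sum_j expR (lam * u j) * p j) ^+ n.
Proof.
move=> p0 lam0.
have -> : expR (- (lam * c)) * (\sum_j expR (lam * u j) * p j) ^+ n =
    \sum_(f : {ffun 'I_n -> I})
      expR (lam * (\sum_(i < n) u (f i) - c)) * \prod_(i < n) p (f i).
  rewrite -[in LHS](card_ord n) -prodr_const bigA_distr_bigA mulr_sumr.
  apply: eq_bigr => f _; rewrite big_split /= -expR_sum mulrA -expRD.
  by rewrite mulrBr mulr_sumr addrC.
rewrite big_mkcond /=; apply: ler_sum => f _.
have prod0 : 0 <= \prod_(i < n) p (f i) by apply: prodr_ge0.
case: ifP => [cu|_]; last by rewrite mulr_ge0 ?expR_ge0.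
rewrite ler_peMl // (le_trans _ (expR_ge1Dx _)) // lerDl.
by rewrite mulr_ge0 // subr_ge0 ltW.
Qed.

Lemma discrete_mgf_le (R : realType) (I : finType) (p u : I -> R) (lam del : R) :
  (forall j, 0 <= p j) -> \sum_j p j = 1 -> \sum_j u j * p j <= del ->
  (forall j, `|u j| <= 1) -> 0 <= lam <= 3^-1 ->
  \sum_j expR (lam * u j) * p j <= expR (lam * del + 3 / 2 * lam ^+ 2).
Proof.
move=> p0 p1 up u1 /andP[lam0 lam3].
apply: le_trans (expR_ge1Dx _); rewrite addrA.
have termwise j : expR (lam * u j) * p j <= (1 + lam * u j + 3 / 2 * lam ^+ 2) * p j.
  apply: ler_wpM2r => //; have /andP[uN u1'] : -1 <= u j <= 1 by rewrite -ler_norml.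
  apply: le_trans (expR_le_quadratic (c := 3 / 2) _ _) _.
  - by lra.
  - by rewrite (_ : 1 - (3 / 2)^-1 = 3^-1 :> R); [nra | field].
  - have : 0 <= lam ^+ 2 * (1 - u j ^+ 2) by apply: mulr_ge0; nra.
    by rewrite exprMn; nra.
apply: le_trans (ler_sum _ (fun j _ => termwise j)) _.
rewrite (_ : \sum_j _ =
    \sum_j p j + lam * \sum_j u j * p j + 3 / 2 * lam ^+ 2 * \sum_j p j).
  by rewrite p1; nra.
by rewrite !mulr_sumr -!big_split; apply: eq_bigr => j _ /=; ring.
Qed.

Lemma measurable_ltr_set d (T : measurableType d) (R : realType) (f g : T -> R) :
  measurable_fun setT f -> measurable_fun setT g -> measurable [set w | f w < g w].
Proof.
by move=> mf mg; rewrite -[X in measurable X]setTI; exact: measurable_fun_ltr.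
Qed.

Lemma bounded_integrable d (T : measurableType d) (R : realType)
    (mu : probability T R) (f : T -> R) (C : R) :
  measurable_fun setT f -> (forall y, `|f y| <= C) -> mu.-integrable setT (EFin \o f).
Proof.
move=> mf fC; apply: measurable_bounded_integrable => //.
  by rewrite ltey_eq fin_num_measure.
exists C; split; first exact: num_real.
by move=> M CM y _; apply: le_trans (fC y) (ltW CM).
Qed.

Lemma bounded_dev_integrable d (T : measurableType d) (R : realType)
    (mu : probability T R) (phi : T -> R) (m : R) :
  measurable_fun setT phi -> (forall y, `|phi y - m| <= 1) ->
  mu.-integrable setT (EFin \o phi).
Proof.
move=> mphi phi1; apply: (@bounded_integrable _ _ _ _ _ (`|m| + 1)) => // y.
by rewrite -[phi y](subrK m) addrC (le_trans (ler_normD _ _)) // lerD2l.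
Qed.

Section finite_range.
Context d (T : measurableType d) (R : realType) (I : finType) (b : T -> I).
Hypothesis mb : forall j, measurable (b @^-1` [set j]).

Lemma fun_finite_rangeE (c : I -> R) y :
  c (b y) = \sum_j c j * \1_(b @^-1` [set j]) y.
Proof.
rewrite (bigD1 (b y)) //= indicE mem_set // mulr1 big1 ?addr0 // => j bj.
by rewrite indicE memNset ?mulr0 //= => bjy; rewrite bjy eqxx in bj.
Qed.

Lemma measurable_fun_finite_range (c : I -> R) : measurable_fun setT (c \o b).
Proof.
rewrite (_ : c \o b = fun y => \sum_j c j * \1_(b @^-1` [set j]) y).
  by apply: measurable_sum => j; apply: measurable_funM => //; exact: measurable_indic.
by apply/funext => y; rewrite /= fun_finite_rangeE.
Qed.

Lemma Rintegral_finite_range (mu : probability T R) (c : I -> R) :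
  \int[mu]_(y in setT) c (b y) = \sum_j c j * fine (mu (b @^-1` [set j])).
Proof.
have int_indic j : mu.-integrable setT (EFin \o \1_(b @^-1` [set j])).
  apply: (@bounded_integrable _ _ _ _ _ 1); first exact: measurable_indic.
  by move=> y; rewrite indicE; case: (_ \in _); rewrite ?normr1 ?normr0.
rewrite /Rintegral.
under eq_integral do rewrite fun_finite_rangeE -sumEFin.
rewrite integral_sum //; last first.
  move=> j; apply: (@bounded_integrable _ _ _ _ _ `|c j|).
    by apply: measurable_funM => //; exact: measurable_indic.
  move=> y; rewrite normrM indicE.
  by case: (_ \in _); rewrite ?normr1 ?normr0 ?mulr1 ?mulr0.
rewrite (eq_bigr (fun j => (c j * fine (mu (b @^-1` [set j])))%:E)) ?sumEFin // => j _.
under eq_integral do rewrite EFinM.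
rewrite integralZl //; last exact: int_indic.
transitivity ((c j)%:E * mu (b @^-1` [set j]))%E.
  by congr (_ * _)%E; have := integral_indic mu measurableT (mb j); rewrite setIT; apply.
by rewrite EFinM fineK ?fin_num_measure.
Qed.

End finite_range.

Lemma Rintegral_empirical d (T : measurableType d) (R : realType) (n : nat)
    (Y : 'I_n -> T) (f : T -> R) :
  measurable_fun setT f -> (forall y, 0 <= f y) ->
  \int[empirical [seq Y i | i <- enum 'I_n]]_(y in setT) f y =
  n%:R^-1 * \sum_(i < n) f (Y i).
Proof.
move=> mf f0; set s := [seq Y i | i <- enum 'I_n].
have size_s : size s = n by rewrite size_map size_enum_ord.
have nth_s (i : 'I_n) : nth point s i = Y i.
  by rewrite (nth_map i) ?nth_ord_enum // size_enum_ord.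
have mEf : measurable_fun setT (EFin \o f) by apply/measurable_EFinP.
rewrite /Rintegral /empirical ge0_integral_mscale //; last by move=> y _; rewrite lee_fin.
rewrite ge0_integral_measure_sum //; last by move=> y _; rewrite lee_fin.
under eq_bigr do rewrite integral_dirac // diracT mul1e.
rewrite sumEFin /= -(big_mkord xpredT (fun i => f (nth point s i))) size_s big_mkord.
by congr (_ * _); apply: eq_bigr => i _; rewrite nth_s.
Qed.

Lemma measurable_rounding d (T : measurableType d) (R : realType) (psi : T -> R)
    (del : R) :
  measurable_fun setT psi -> (forall y, `|psi y| <= 1) -> 0 < del ->
  exists N (b : T -> 'I_N) (u : 'I_N -> R),
    [/\ forall j, measurable (b @^-1` [set j]),
        forall y, psi y <= u (b y) <= psi y + del
      & forall j, `|u j| <= 1].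
Proof.
move=> mpsi psi1 del0.
have psi_bd y : -1 <= psi y <= 1 by rewrite -ler_norml.
pose r y := (psi y + 1) / del.
have r0 y : 0 <= r y.
  by apply: divr_ge0; [have /andP[psiN _] := psi_bd y; lra | exact: ltW].
pose K := Num.truncn (2 / del).
have rK y : (Num.truncn (r y) < K.+1)%N.
  rewrite ltnS truncn_le_nat; apply: le_lt_trans (truncnS_gt _).
  by rewrite ler_pM2r ?invr_gt0 //; have /andP[_ psi_le1] := psi_bd y; lra.
exists K.+1, (fun y => inord (Num.truncn (r y))).
exists (fun j => Num.min (j.+1%:R * del - 1) 1).
split.
- move=> j; rewrite (_ : _ @^-1` _ = setT `&` r @^-1` `[j%:R, j.+1%:R[).
    apply: (measurable_funM _ (measurable_cst _)) measurableT _ (measurable_itv _).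
    exact: measurable_funD mpsi (measurable_cst _).
  apply/seteqP; split => y /=.
    by move=> yj; split => //; rewrite in_itv /= -truncn_eq // -yj inordK ?rK.
  move=> [_]; rewrite in_itv /= -truncn_eq // => /eqP tj.
  by apply: val_inj; rewrite /= inordK ?rK.
- move=> y; rewrite inordK //; have /andP[lo hi] := truncn_itv (r0 y).
  have r_del : r y * del = psi y + 1 by rewrite mulfVK ?lt0r_neq0.
  have {}lo := ler_wpM2r (ltW del0) lo.
  have {}hi : r y * del < (Num.truncn (r y)).+1%:R * del by rewrite ltr_pM2r.
  rewrite {}r_del in lo hi *; rewrite -[_.+1%:R]natr1 in hi.
  have /andP[_ psi_le1] := psi_bd y.
  rewrite ge_min le_min; apply/andP; split; first by apply/andP; split; lra.
  by apply/orP; left; lra.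
- move=> j; rewrite ler_norml ge_min le_min lexx orbT andbT.
  have : 0 <= j%:R * del :> R by rewrite mulr_ge0 ?ler0n ?ltW.
  by rewrite -natr1 mulrDl mul1r => ?; apply/andP; split; lra.
Qed.

Lemma rounding_mgf_le d (T : measurableType d) (R : realType) (mu : probability T R)
    (phi : T -> R) (m : R) (I : finType) (b : T -> I) (u : I -> R) (del lam : R) :
  measurable_fun setT phi -> \int[mu]_(y in setT) phi y = m ->
  (forall y, `|phi y - m| <= 1) -> (forall j, measurable (b @^-1` [set j])) ->
  (forall y, phi y - m <= u (b y) <= phi y - m + del) -> (forall j, `|u j| <= 1) ->
  0 <= lam <= 3^-1 ->
  \sum_j expR (lam * u j) * fine (mu (b @^-1` [set j]))
    <= expR (lam * del + 3 / 2 * lam ^+ 2).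
Proof.
move=> mphi phim phi1 mb phi_u u1 lam13.
have muT : (mu : measure T R) setT = 1%E by exact: probability_setT.
apply: discrete_mgf_le => //.
- by move=> j; apply: fine_ge0; exact: measure_ge0.
- have := Rintegral_finite_range mb mu (fun=> 1).
  rewrite Rintegral_cst // muT /= mul1r => ->.
  by apply: eq_bigr => j _; rewrite mul1r.
rewrite -Rintegral_finite_range //.
apply: le_trans (_ : _ <= \int[mu]_(y in setT) (phi y + (del - m))) _.
  apply: le_Rintegral => //.
  - apply: (@bounded_integrable _ _ _ _ _ 1) => //.
    exact: measurable_fun_finite_range.
  - have dev y : `|phi y + (del - m) - del| <= 1.
      by rewrite (_ : _ - del = phi y - m) //; ring.
    exact: bounded_dev_integrable (measurable_funD mphi (measurable_cst _)) dev.
  - by move=> y _; have /andP[_ ?] := phi_u y; lra.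
rewrite RintegralD //; last first.
- by apply: (@bounded_integrable _ _ _ _ _ `|del - m|) => //; exact: measurable_cst.
- exact: bounded_dev_integrable mphi phi1.
by rewrite phim Rintegral_cst // muT /= mulr1 addrC subrK.
Qed.

Section iid_sample.
Context (R : realType) d (T : measurableType d) (mu : probability T R).
Context dO (Omega : measurableType dO) (P : probability Omega R).
Variables (n : nat) (X : 'I_n -> Omega -> T).
Hypothesis mX : forall i, measurable_fun setT (X i).
Hypothesis X_law : forall i A, measurable A -> P (X i @^-1` A) = mu A.
Hypothesis X_indep : mutually_independent P X.

Lemma measurable_sample_mean (f : T -> R) : measurable_fun setT f ->
  measurable_fun setT (fun w => n%:R^-1 * \sum_(i < n) f (X i w)).
Proof.
move=> mf; apply: measurable_funM; first exact: measurable_cst.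
by apply: measurable_sum => i; exact: measurableT_comp.
Qed.

Section cells.
Variables (I : finType) (b : T -> I).
Hypothesis mb : forall j, measurable (b @^-1` [set j]).

Let cell (f : {ffun 'I_n -> I}) :=
  \bigcap_(i in [set: 'I_n]) (X i @^-1` (b @^-1` [set f i])).

Let measurable_cell f : measurable (cell f).
Proof.
apply: fin_bigcap_measurable => [|i _]; first exact: finite_finset.
by rewrite -[X i @^-1` _]setTI; exact: mX.
Qed.

Let sample_cells_bigcup (Q : pred {ffun 'I_n -> I}) :
  [set w | Q [ffun i => b (X i w)]] = \bigcup_(f in [set f | Q f]) cell f.
Proof.
apply/seteqP; split => [w Qw | w [f Qf cell_w]].
  by exists [ffun i => b (X i w)] => // i _ /=; rewrite ffunE.
suff cellE : [ffun i => b (X i w)] = f by rewrite /= cellE.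
by apply/ffunP => i; rewrite ffunE; exact: cell_w.
Qed.

Lemma measurable_sample_cells (Q : pred {ffun 'I_n -> I}) :
  measurable [set w | Q [ffun i => b (X i w)]].
Proof.
by rewrite sample_cells_bigcup; apply: fin_bigcup_measurable.
Qed.

Lemma prob_sample_cells (Q : pred {ffun 'I_n -> I}) :
  P [set w | Q [ffun i => b (X i w)]] =
  (\sum_(f | Q f) \prod_(i < n) fine (mu (b @^-1` [set f i])))%:E.
Proof.
rewrite sample_cells_bigcup measure_fin_bigcup //; first last.
- move=> f g _ _ [w [fw gw]]; apply/ffunP => i.
  by rewrite -(fw i Logic.I) -(gw i Logic.I).
- exact: finite_finset.
rewrite (fsbigE [seq f <- index_enum _ | Q f]) //; first last.
- by move=> f Qf; rewrite mem_filter mem_index_enum andbT Qf.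
- by move=> f /=; rewrite mem_filter => /andP[].
- by rewrite filter_uniq // index_enum_uniq.
rewrite big_filter_cond -sumEFin; apply: eq_big => [f|f _].
  by rewrite mem_setE andbb.
rewrite /cell; have /= -> := @X_indep (fun i => b @^-1` [set f i]) (fun i => mb (f i)).
rewrite -prodEFin; apply: eq_bigr => i _.
by rewrite X_law // fineK // fin_num_measure.
Qed.

End cells.

Lemma measurable_sample_mean_gt (f : T -> R) (c t : R) : measurable_fun setT f ->
  measurable [set w | (t < n%:R^-1 * \sum_(i < n) f (X i w) - c)%R].
Proof.
move=> mf; apply: measurable_ltr_set; first exact: measurable_cst.
by apply: measurable_funB; [exact: measurable_sample_mean | exact: measurable_cst].
Qed.

Lemma measurable_sample_mean_dev (f : T -> R) (c t : R) : measurable_fun setT f ->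
  measurable [set w | (t < `|n%:R^-1 * \sum_(i < n) f (X i w) - c|)%R].
Proof.
move=> mf; apply: measurable_ltr_set; first exact: measurable_cst.
apply: measurableT_comp; first exact: normr_measurable.
by apply: measurable_funB; [exact: measurable_sample_mean | exact: measurable_cst].
Qed.

Lemma sample_mean_tail (phi : T -> R) (m t : R) : (0 < n)%N ->
  measurable_fun setT phi -> \int[mu]_(y in setT) phi y = m ->
  (forall y, `|phi y - m| <= 1) -> 0 < t ->
  (P [set w | (t < n%:R^-1 * \sum_(i < n) phi (X i w) - m)%R]
    <= (expR (- (n%:R * t ^+ 2 / 9)))%:E)%E.
Proof.
move=> n0 mphi phim phi1 t0.
have n0R : 0 < n%:R :> R by rewrite ltr0n.
have centerE w : n%:R^-1 * \sum_(i < n) phi (X i w) - m =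
                 n%:R^-1 * \sum_(i < n) (phi (X i w) - m).
  by rewrite sumrB sumr_const card_ord -mulr_natl; field; rewrite lt0r_neq0.
set A := [set w | _].
have mA : measurable A by exact: measurable_sample_mean_gt.
have [t1|t1] := ltP 1 t.
  rewrite (_ : A = set0) ?measure0 ?lee_fin ?expR_ge0 //.
  apply/seteqP; split => // w; rewrite /A /= centerE => tw.
  suff : n%:R^-1 * \sum_(i < n) (phi (X i w) - m) <= 1 by lra.
  rewrite mulrC ler_pdivrMr // mul1r -[n in n%:R]card_ord -sumr_const.
  apply: ler_sum => i _.
  by have /andP[] := eqbLR (ler_norml _ _) (phi1 (X i w)).
(* With lam = t/3 and grid mesh del = t/6 the Chernoff exponent
   n (lam del + 3/2 lam^2 - lam t) is exactly - n t^2 / 9. *)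
pose lam := t / 3; pose del := t / 6.
have [N [b [u [mb phi_u u1]]]] := measurable_rounding (psi := fun y => phi y - m)
  (measurable_funB mphi (measurable_cst _)) phi1 (divr_gt0 t0 (ltr0n _ 6)).
have mgf : \sum_j expR (lam * u j) * fine (mu (b @^-1` [set j]))
    <= expR (lam * del + 3 / 2 * lam ^+ 2).
  by apply: rounding_mgf_le phim phi1 mb phi_u u1 _ => //; apply/andP; split;
    rewrite /lam; lra.
pose Q (f : {ffun 'I_n -> 'I_N}) := n%:R * t < \sum_(i < n) u (f i).
apply: (@le_trans _ _ (P [set w | Q [ffun i => b (X i w)]])).
  apply: le_measure; rewrite ?inE; [exact: mA | exact: measurable_sample_cells mb Q |].
  move=> w; rewrite /A /Q /= centerE -(ltr_pM2l n0R) mulrA mulfV ?mul1r ?lt0r_neq0 // => tw.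
  apply: lt_le_trans tw _; apply: ler_sum => i _; rewrite ffunE.
  by have /andP[] := phi_u (X i w).
rewrite prob_sample_cells // lee_fin.
have lam0 : 0 <= lam by rewrite divr_ge0 // ltW.
have p0 j : 0 <= fine (mu (b @^-1` [set j])) by apply: fine_ge0; exact: measure_ge0.
apply: le_trans (sum_ffun_prod_tail_le _ _ _ p0 lam0) _.
apply: le_trans (ler_wpM2l (expR_ge0 _) (lerXn2r n _ _ mgf)) _;
  rewrite ?nnegrE ?expR_ge0 //.
  by apply: sumr_ge0 => j _; rewrite mulr_ge0 ?expR_ge0.
rewrite -expRM_natl -expRD ler_expR /lam /del; nra.
Qed.

Lemma sample_mean_dev (phi : T -> R) (m t : R) : (0 < n)%N ->
  measurable_fun setT phi -> \int[mu]_(y in setT) phi y = m ->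
  (forall y, `|phi y - m| <= 1) -> 0 < t ->
  (P [set w | (t < `|n%:R^-1 * \sum_(i < n) phi (X i w) - m|)%R]
    <= (2 * expR (- (n%:R * t ^+ 2 / 9)))%:E)%E.
Proof.
move=> n0 mphi phim phi1 t0.
have mphiN : measurable_fun setT (fun y => - phi y) by exact: measurableT_comp.
have phimN : \int[mu]_(y in setT) - phi y = - m.
  under eq_Rintegral do rewrite -mulN1r.
  by rewrite RintegralZl ?phim ?mulN1r //; exact: bounded_dev_integrable mphi phi1.
have phiN1 y : `|- phi y - - m| <= 1 by rewrite -opprD normrN.
have meanN w : n%:R^-1 * \sum_(i < n) - phi (X i w) - - m =
               - (n%:R^-1 * \sum_(i < n) phi (X i w) - m).
  by rewrite sumrN mulrN opprB opprK addrC.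
apply: le_trans (le_measure _ _ _ (_ : _ `<=`
    [set w | t < n%:R^-1 * \sum_(i < n) phi (X i w) - m] `|`
    [set w | t < n%:R^-1 * \sum_(i < n) - phi (X i w) - - m])) _;
  rewrite ?inE.
- exact: measurable_sample_mean_dev.
- apply: measurableU; [exact: measurable_sample_mean_gt _ _ mphi |].
  exact: measurable_sample_mean_gt _ _ mphiN.
- by move=> w /=; rewrite meanN ltr_normr => /orP[]; [left | right].
apply: le_trans (measureU2 _ (measurable_sample_mean_gt _ _ mphi)
  (measurable_sample_mean_gt _ _ mphiN)) _.
apply: le_trans (leeD (sample_mean_tail n0 mphi phim phi1 t0)
  (sample_mean_tail n0 mphiN phimN phiN1 t0)) _.
by rewrite -EFinD lee_fin; lra.
Qed.

End iid_sample.

Section kernel_operator.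
Context d (T : measurableType d) (R : realType).
Variables (k : T * T -> R) (Ms : set T) (v : T -> R) (x : T).
Hypothesis mk : measurable_fun setT k.
Hypothesis k01 : forall z, 0 <= k z <= 1.
Hypothesis mMs : measurable Ms.
Hypothesis mv : measurable_fun (~` Ms) v.
Hypothesis v01 : forall y, (~` Ms) y -> 0 <= v y <= 1.

Definition Top_integrand y := if y \in Ms then k (x, y) else k (x, y) * v y.

Let Top_integrand_split y : Top_integrand y =
  ((fun y => k (x, y)) \_ Ms) y + ((fun y => k (x, y) * v y) \_ (~` Ms)) y.
Proof.
rewrite /Top_integrand !patchE in_setC.
by case: (y \in Ms) => /=; rewrite ?addr0 ?add0r.
Qed.

Let mkx : measurable_fun setT (fun y => k (x, y)).
Proof. exact: measurable_fun_pair2. Qed.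

Let measurable_in : measurable_fun setT ((fun y => k (x, y)) \_ Ms).
Proof. exact/(measurable_restrictT _ mMs).1/measurable_funTS. Qed.

Let measurable_out : measurable_fun setT ((fun y => k (x, y) * v y) \_ (~` Ms)).
Proof.
apply/(measurable_restrictT _ (measurableC mMs)).1.
by apply: measurable_funM => //; exact: measurable_funTS.
Qed.

Let bounds_in y : 0 <= ((fun y => k (x, y)) \_ Ms) y <= 1.
Proof. by rewrite patchE; case: ifP => _ //=; rewrite lexx ler01. Qed.

Let bounds_out y : 0 <= ((fun y => k (x, y) * v y) \_ (~` Ms)) y <= 1.
Proof.
rewrite patchE; case: ifP => [/set_mem yMs|_] /=; last by rewrite lexx ler01.
have /andP[k0 k1] := k01 (x, y); have /andP[v0 v1] := v01 yMs.
by rewrite mulr_ge0 // mulr_ile1.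
Qed.

Lemma measurable_Top_integrand : measurable_fun setT Top_integrand.
Proof. by rewrite (funext Top_integrand_split); exact: measurable_funD. Qed.

Lemma Top_integrand_bounds y : 0 <= Top_integrand y <= k (x, y).
Proof.
rewrite /Top_integrand; have /andP[k0 k1] := k01 (x, y).
case: ifPn => [_|/negP yMs]; first by rewrite k0 lexx.
have /andP[v0 v1] : 0 <= v y <= 1 by apply: v01 => yMs'; apply: yMs; exact: mem_set.
by rewrite mulr_ge0 // ler_piMr.
Qed.

Lemma Top_empirical (rho : R) n (Y : 'I_n -> T) :
  Top (empirical [seq Y i | i <- enum 'I_n]) k Ms rho v x =
  (n%:R^-1 * \sum_(i < n) Top_integrand (Y i)) /
    (rho + n%:R^-1 * \sum_(i < n) k (x, Y i)).
Proof.
rewrite /Top (Rintegral_mkcond _ Ms) (Rintegral_mkcond _ (~` Ms)).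
rewrite !Rintegral_empirical //; first last.
- by move=> y; case/andP: (bounds_in y).
- by move=> y; case/andP: (bounds_out y).
- by move=> y; case/andP: (k01 (x, y)).
by rewrite -mulrDr -big_split; under [in RHS]eq_bigr do rewrite Top_integrand_split.
Qed.

Lemma Top_empirical_dev (rho th eps : R) n (Y : 'I_n -> T) : 0 < rho ->
  (eps < `|th - Top (empirical [seq Y i | i <- enum 'I_n]) k Ms rho v x|) =
  (eps * (rho + n%:R^-1 * \sum_(i < n) k (x, Y i)) <
   `|th * rho - n%:R^-1 * \sum_(i < n) (Top_integrand (Y i) - th * k (x, Y i))|).
Proof.
move=> rho0; rewrite Top_empirical ltr_distl_div.
  by rewrite sumrB -mulr_sumr; congr (_ < `|_|); ring.
rewrite ltr_wpDr // mulr_ge0 ?invr_ge0 // sumr_ge0 // => i _.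
by case/andP: (k01 (x, Y i)).
Qed.

Lemma measurable_Top_empirical_dev (rho th eps : R) dO (Omega : measurableType dO)
    n (Y : 'I_n -> Omega -> T) :
  0 < rho -> (forall i, measurable_fun setT (Y i)) ->
  measurable [set w | eps < `|th - Top (empirical [seq Y i w | i <- enum 'I_n])
                                         k Ms rho v x|].
Proof.
move=> rho0 mY.
have mh : measurable_fun setT (fun y => Top_integrand y - th * k (x, y)).
  apply: measurable_funB; first exact: measurable_Top_integrand.
  by apply: measurable_funM => //; exact: measurable_cst.
have mean_kx := @measurable_sample_mean _ _ _ _ _ _ _ mY _ mkx.
have mean_h := @measurable_sample_mean _ _ _ _ _ _ _ mY _ mh.
rewrite (_ : [set w | _] = [set w |
    eps * (rho + n%:R^-1 * \sum_(i < n) k (x, Y i w)) <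
    `|th * rho - n%:R^-1 * \sum_(i < n) (Top_integrand (Y i w) - th * k (x, Y i w))|]).
  apply: measurable_ltr_set.
    apply: measurable_funM; first exact: measurable_cst.
    by apply: measurable_funD; [exact: measurable_cst | exact: mean_kx].
  apply: measurableT_comp; first exact: normr_measurable.
  by apply: measurable_funB; [exact: measurable_cst | exact: mean_h].
by apply/seteqP; split => w; rewrite /= Top_empirical_dev.
Qed.

Section probability.
Variables (mu : probability T R) (rho : R).
Hypothesis rho_gt0 : 0 < rho.

Let muT : (mu : measure T R) setT = 1%E.
Proof. exact: probability_setT. Qed.

Let integrable_unit_bounded (f : T -> R) : measurable_fun setT f ->
  (forall y, 0 <= f y <= 1) -> mu.-integrable setT (EFin \o f).
Proof.
move=> mf f01; apply: (@bounded_integrable _ _ _ _ _ 1) => // y.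
by case/andP: (f01 y) => f0 f1; rewrite ger0_norm.
Qed.

Let int_integrand : mu.-integrable setT (EFin \o Top_integrand).
Proof.
apply: integrable_unit_bounded; first exact: measurable_Top_integrand.
move=> y; have /andP[G0 Gk] := Top_integrand_bounds y.
by rewrite G0 (le_trans Gk) //; case/andP: (k01 (x, y)).
Qed.

Let int_kx : mu.-integrable setT (EFin \o (fun y => k (x, y))).
Proof. exact: integrable_unit_bounded. Qed.

Lemma Top_probabilityE : Top mu k Ms rho v x =
  (\int[mu]_(y in setT) Top_integrand y) / (rho + \int[mu]_(y in setT) k (x, y)).
Proof.
rewrite /Top (Rintegral_mkcond _ Ms) (Rintegral_mkcond _ (~` Ms)) -RintegralD //;
  try exact: integrable_unit_bounded.
by congr (_ / _); apply: eq_Rintegral => y _; rewrite Top_integrand_split.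
Qed.

Lemma Top_probability_bounds :
  0 <= Top mu k Ms rho v x /\ Top mu k Ms rho v x * (rho + 1) <= 1.
Proof.
rewrite Top_probabilityE.
set N := \int[mu]_(y in setT) _; set D := \int[mu]_(y in setT) _.
have N0 : 0 <= N by apply: Rintegral_ge0 => y _; case/andP: (Top_integrand_bounds y).
have ND : N <= D.
  by apply: le_Rintegral => // y _; case/andP: (Top_integrand_bounds y).
have D1 : D <= 1.
  apply: le_trans (_ : _ <= \int[mu]_(y in setT) (1 : R)) _.
    apply: le_Rintegral => //; last by move=> y _; case/andP: (k01 (x, y)).
    by apply: integrable_unit_bounded => // y; rewrite lexx ler01.
  by rewrite Rintegral_cst // muT /= mul1r.
have rD : 0 < rho + D.
  by apply: lt_le_trans rho_gt0 _; rewrite lerDl; exact: le_trans N0 ND.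
split; first by apply: divr_ge0 => //; exact: ltW.
rewrite mulrAC ler_pdivrMr // mul1r.
have : 0 <= (1 - N) * rho.
  by apply: mulr_ge0; [rewrite subr_ge0; exact: le_trans ND D1 | exact: ltW].
nra.
Qed.

Lemma Rintegral_Top_centered :
  \int[mu]_(y in setT) (Top_integrand y - Top mu k Ms rho v x * k (x, y)) =
  Top mu k Ms rho v x * rho.
Proof.
set th := Top mu k Ms rho v x.
have rD : 0 < rho + \int[mu]_(y in setT) k (x, y).
  apply: lt_le_trans rho_gt0 _; rewrite lerDl.
  by apply: Rintegral_ge0 => y _; case/andP: (k01 (x, y)).
have int_thk : mu.-integrable setT (EFin \o (fun y => th * k (x, y))).
  apply: (@bounded_integrable _ _ _ _ _ `|th|); first exact: measurable_funM.
  move=> y; have /andP[k0 k1] := k01 (x, y).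
  by rewrite normrM ler_piMr // ger0_norm.
rewrite RintegralB // RintegralZl //.
have : th * (rho + \int[mu]_(y in setT) k (x, y)) = \int[mu]_(y in setT) Top_integrand y.
  by rewrite /th Top_probabilityE mulfVK ?lt0r_neq0.
by rewrite mulrDr => <-; ring.
Qed.

End probability.

Lemma Top_centered_bound (th rho : R) y :
  0 <= rho -> 0 <= th -> th * (rho + 1) <= 1 ->
  `|Top_integrand y - th * k (x, y) - th * rho| <= 1.
Proof.
move=> rho0 th0; rewrite mulrDr mulr1 => th1.
have /andP[G0 Gk] := Top_integrand_bounds y; have /andP[k0 k1] := k01 (x, y).
have thk : 0 <= th * k (x, y) <= th by rewrite mulr_ge0 // ler_piMr.
have thr : 0 <= th * rho by rewrite mulr_ge0.
by case/andP: thk => ? ?; rewrite ler_norml; apply/andP; split; lra.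
Qed.

End kernel_operator.

Theorem lemma3 (R : realType) (M : metricType R)
  (m0 : M) (hcompact : compact [set: M])
  (mu : probability (borel m0) R)
  (k : borel m0 * borel m0 -> R)
  (mk : measurable_fun [set: borel m0 * borel m0] k)
  (k01 : forall z, 0 <= k z <= 1)
  (Ms : set (borel m0)) (mMs : measurable Ms)
  (rho : R) (rho_gt0 : 0 < rho)
  (vstar : borel m0 -> R)
  (mvstar : measurable_fun (~` Ms) vstar)
  (vstar01 : forall x, (~` Ms) x -> 0 <= vstar x <= 1)
  (vstar_fix : forall x, (~` Ms) x -> Top mu k Ms rho vstar x = vstar x)
  (vstar_uniq : forall w : borel m0 -> R, measurable_fun (~` Ms) w ->
     (forall x, (~` Ms) x -> 0 <= w x <= 1) ->
     (forall x, (~` Ms) x -> Top mu k Ms rho w x = w x) ->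
     forall x, (~` Ms) x -> w x = vstar x)
  (n : nat) (n_gt0 : (0 < n)%N)
  (dO : measure_display) (Omega : measurableType dO) (P : probability Omega R)
  (X : 'I_n -> Omega -> borel m0)
  (mX : forall i, measurable_fun [set: Omega] (X i))
  (X_law : forall i A, measurable A -> P (X i @^-1` A) = mu A)
  (X_indep : mutually_independent P X)
  (x : borel m0) (hx : (~` Ms) x) (eps : R) (eps_gt0 : 0 < eps) :
  (P [set w | (eps < `| Top mu k Ms rho vstar x
                     - Top (empirical [seq X i w | i <- enum 'I_n]) k Ms rho vstar x |)%R]
  < (4 * expR (- (n%:R * rho ^+ 2 * eps ^+ 2 / 9)))%:E)%E.
Proof.
set th := Top mu k Ms rho vstar x.
have [th0 th1] := Top_probability_bounds x mk k01 mMs mvstar vstar01 mu rho_gt0.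
pose h y := Top_integrand k Ms vstar x y - th * k (x, y).
have mh : measurable_fun setT h.
  apply: measurable_funB; first exact: measurable_Top_integrand.
  by apply: measurable_funM; [exact: measurable_cst | exact: measurable_fun_pair2].
have hm := Rintegral_Top_centered x mk k01 mMs mvstar vstar01 mu rho_gt0.
have h1 y := Top_centered_bound x k01 vstar01 y (ltW rho_gt0) th0 th1.
have A_sub : [set w | eps < `|th - Top (empirical [seq X i w | i <- enum 'I_n])
                                        k Ms rho vstar x|]
    `<=` [set w | rho * eps < `|n%:R^-1 * \sum_(i < n) h (X i w) - th * rho|].
  move=> w /=; rewrite Top_empirical_dev // distrC; apply: le_lt_trans.
  rewrite [rho * eps]mulrC ler_wpM2l ?(ltW eps_gt0) // lerDl mulr_ge0 ?invr_ge0 //.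
  by apply: sumr_ge0 => i _; case/andP: (k01 (x, X i w)).
apply: le_lt_trans (le_measure _ _ _ A_sub) _; rewrite ?inE.
- exact: measurable_Top_empirical_dev.
- exact: measurable_sample_mean_dev.
apply: le_lt_trans (sample_mean_dev mX X_law X_indep n_gt0 mh hm h1
  (mulr_gt0 rho_gt0 eps_gt0)) _.
rewrite lte_fin exprMn mulrA.
by have := expR_gt0 (- (n%:R * rho ^+ 2 * eps ^+ 2 / 9)); lra.
Qed.
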